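(* Let $d>K\ge1$, $\mathbf Q\in\mathrm{St}(d,K)$, $\lambda_1>\dots>\lambda_K>0$, $\boldsymbol\Theta=\mathrm{diag}(\sqrt{\lambda_1},\dots,\sqrt{\lambda_K})$, $a_1>\dots>a_K>0$, $\alpha>0$, and $\mathcal A_\alpha(\mathbf X)=\alpha\mathbf X+\mathbf Q\boldsymbol\Theta^2\mathbf Q^\top\mathbf X\,\mathrm{diag}(a_1,\dots,a_K)$. A point $\mathbf X\in\mathrm{St}(d,K)$ is a fixed point of the iteration $\mathbf X^{t+1}\in\mathcal P_{\mathrm{St}}(\mathcal A_\alpha(\mathbf X^t))$ (i.e., $\mathbf X\in\mathcal P_{\mathrm{St}}(\mathcal A_\alpha(\mathbf X))$) if and only if $\mathrm{tr}(\mathbf X^\top\mathcal A_\alpha(\mathbf X))=\|\mathcal A_\alpha(\mathbf X)\|_*$. Furthermore, every such fixed point is a first-order critical point of $\max_{\mathbf X\in\mathrm{St}(d,K)}\mathrm{tr}(\mathbf X^\top\mathbf Q\boldsymbol\Theta^2\mathbf Q^\top\mathbf X\,\mathrm{diag}(a_1,\dots,a_K))$.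
   Context: $\mathrm{St}(d,K)=\{\mathbf X\in\mathbb R^{d\times K}:\mathbf X^\top\mathbf X=\mathbf I_K\}$, viewed as an embedded submanifold of $\mathbb R^{d\times K}$ with the Euclidean metric (critical point = vanishing Riemannian gradient). $\mathcal P_{\mathrm{St}}(\mathbf Y)$ is the set of Frobenius-nearest points of $\mathrm{St}(d,K)$ to $\mathbf Y$. $\|\cdot\|_*$ is the nuclear norm. *)

From HB Require Import structures.
From mathcomp Require Import all_boot all_order all_algebra.
From mathcomp Require Import all_classical all_reals all_analysis.
Set Implicit Arguments. Unset Strict Implicit. Unset Printing Implicit Defensive.
Import Order.TTheory GRing.Theory Num.Theory.
Import numFieldNormedType.Exports.
Local Open Scope ring_scope.
Local Open Scope classical_set_scope.

Section Defs.
Variable R : realType.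

Definition Stiefel (d K : nat) (X : 'M[R]_(d, K)) : Prop := X^T *m X = 1%:M.

Definition frob (m n : nat) (A : 'M[R]_(m, n)) : R := Num.sqrt (\tr (A^T *m A)).

Definition P_St (d K : nat) (Y : 'M[R]_(d, K)) : set 'M[R]_(d, K) :=
  [set X | Stiefel X /\ forall Z, Stiefel Z -> frob (X - Y) <= frob (Z - Y)].

Definition psd (n : nat) (S : 'M[R]_n) : Prop :=
  S^T = S /\ forall v : 'cV[R]_n, 0 <= (v^T *m S *m v) 0 0.

(* Nuclear norm ||A||_* = tr (A^T A)^{1/2}, the sum of singular values;
   (A^T A)^{1/2} is the (unique) PSD square root of A^T A. *)
Definition nucnorm (m n : nat) (A : 'M[R]_(m, n)) : R :=
  \tr (get [set S : 'M[R]_n | psd S /\ S *m S = A^T *m A]).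

Definition tangent (d K : nat) (X V : 'M[R]_(d, K)) : Prop :=
  X^T *m V + V^T *m X = 0.

Definition is_rgrad (d K : nat) (f : 'M[R]_(d, K) -> R) (X G : 'M[R]_(d, K))
  : Prop :=
  tangent X G /\
  forall V, tangent X V ->
    is_derive (0 : R) (1 : R) (fun t : R => f (X + t *: V)) (\tr (G^T *m V)).

Definition critical_St (d K : nat) (f : 'M[R]_(d, K) -> R) (X : 'M[R]_(d, K))
  : Prop := Stiefel X /\ is_rgrad f X 0.

End Defs.

(* Every Stiefel point has Frobenius norm sqrt K, so X is a nearest Stiefel
   point to Y exactly when it maximises tr (Z^T Y) over the Stiefel manifold.
   Comparing a maximiser X with O X for reflections and plane rotations O
   shows that Y X^T is positive semidefinite; hence Y = X C with
   C = X^T Y positive semidefinite, so C = (Y^T Y)^(1/2) and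
   tr (X^T Y) = ||Y||_*.  Conversely tr (Z^T Y) <= ||Y||_* for every Stiefel Z,
   by diagonalising Y^T Y (the real spectral theorem, proved by Householder
   deflation) and applying Cauchy-Schwarz column by column.  For
   Y = A_alpha(X), the relation Y = X C reads M X diag(a) = X (C - alpha I)
   with a symmetric right factor, and this kills the first variation of f
   along every tangent direction. *)

From HB Require Import structures.
From mathcomp Require Import all_boot all_order all_algebra.
From mathcomp Require Import all_classical all_reals all_analysis.
From mathcomp Require Import complex ring lra.
Set Implicit Arguments. Unset Strict Implicit. Unset Printing Implicit Defensive.
Import Order.TTheory GRing.Theory Num.Theory.
Import numFieldNormedType.Exports.
Local Open Scope ring_scope.
Local Open Scope classical_set_scope.

Section DotProduct.
Variable R : realFieldType.
Implicit Types n : nat.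

Lemma lin_coef_eq0 (a b : R) : (forall t, 0 <= t * b + t ^+ 2 * a) -> b = 0.
Proof.
move=> H; apply/eqP; apply/negPn/negP => hb.
have hb2 : 0 < b ^+ 2 by rewrite exprn_even_gt0.
case: (lerP a 0) => ha; first by have := H (- b); nra.
have := H (- b / (2 * a)).
have -> : - b / (2 * a) * b + (- b / (2 * a)) ^+ 2 * a = - (b ^+ 2 / (4 * a)).
  by field; rewrite gt_eqF.
rewrite oppr_ge0 leNgt => /negP; apply.
by rewrite divr_gt0 // mulr_gt0.
Qed.

Definition dotv n (u v : 'cV[R]_n) : R := (u^T *m v) 0 0.

Lemma dotvE n (u v : 'cV[R]_n) : dotv u v = \sum_i u i 0 * v i 0.
Proof. by rewrite /dotv mxE; apply: eq_bigr => i _; rewrite mxE. Qed.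

Lemma dotvC n (u v : 'cV[R]_n) : dotv u v = dotv v u.
Proof. by rewrite !dotvE; apply: eq_bigr => i _; rewrite mulrC. Qed.

Lemma dotvv_ge0 n (u : 'cV[R]_n) : 0 <= dotv u u.
Proof. by rewrite dotvE; apply: sumr_ge0 => i _; rewrite -expr2 sqr_ge0. Qed.

Lemma dotvv_eq0 n (u : 'cV[R]_n) : dotv u u = 0 -> u = 0.
Proof.
rewrite dotvE => /eqP; rewrite psumr_eq0 => [/allP uE|i _]; last first.
  by rewrite -expr2 sqr_ge0.
apply/matrixP => i j; rewrite ord1 mxE.
by have := uE i (mem_index_enum _); rewrite -expr2 sqrf_eq0 => /eqP.
Qed.

Lemma dotvDl n (u v w : 'cV[R]_n) : dotv (u + v) w = dotv u w + dotv v w.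
Proof. by rewrite !dotvE -big_split; apply: eq_bigr => i _; rewrite !mxE mulrDl. Qed.

Lemma dotvDr n (u v w : 'cV[R]_n) : dotv w (u + v) = dotv w u + dotv w v.
Proof. by rewrite !(dotvC w) dotvDl. Qed.

Lemma dotvBl n (u v w : 'cV[R]_n) : dotv (u - v) w = dotv u w - dotv v w.
Proof. by rewrite !dotvE -sumrB; apply: eq_bigr => i _; rewrite !mxE mulrBl. Qed.

Lemma dotvBr n (u v w : 'cV[R]_n) : dotv w (u - v) = dotv w u - dotv w v.
Proof. by rewrite !(dotvC w) dotvBl. Qed.

Lemma dotvZl n a (u v : 'cV[R]_n) : dotv (a *: u) v = a * dotv u v.
Proof. by rewrite !dotvE mulr_sumr; apply: eq_bigr => i _; rewrite !mxE mulrA. Qed.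

Lemma dotvZr n a (u v : 'cV[R]_n) : dotv v (a *: u) = a * dotv v u.
Proof. by rewrite !(dotvC v) dotvZl. Qed.

Lemma dotv_mulmx m n (A : 'M[R]_(m, n)) (x : 'cV_m) (y : 'cV_n) :
  dotv x (A *m y) = dotv (A^T *m x) y.
Proof. by rewrite /dotv trmx_mul trmxK mulmxA. Qed.

Lemma dotv_delta n (i : 'I_n) (x : 'cV[R]_n) : dotv (delta_mx i 0) x = x i 0.
Proof.
rewrite dotvE (bigD1 i) //= big1 => [|j /negPf ji]; rewrite !mxE ?ji ?mul0r //.
by rewrite !eqxx mul1r addr0.
Qed.

Lemma trmx_mul_dotv n (u v : 'cV[R]_n) : u^T *m v = (dotv u v)%:M.
Proof. exact: mx11_scalar. Qed.

Lemma trmx_mulE m n p (A : 'M[R]_(m, n)) (B : 'M[R]_(m, p)) i j :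
  (A^T *m B) i j = dotv (col i A) (col j B).
Proof. by rewrite mxE dotvE; apply: eq_bigr => k _; rewrite !mxE. Qed.

Lemma col_mulmx m n p (A : 'M[R]_(m, n)) (B : 'M[R]_(n, p)) j :
  col j (A *m B) = A *m col j B.
Proof. by rewrite !colE mulmxA. Qed.

Lemma mxtrace_gram_ge0 m n (A : 'M[R]_(m, n)) : 0 <= \tr (A^T *m A).
Proof. by apply: sumr_ge0 => i _; rewrite trmx_mulE dotvv_ge0. Qed.

End DotProduct.

Section Householder.
Variable R : realFieldType.
Implicit Types n : nat.

(* The Householder reflection across the hyperplane orthogonal to [u];
   [hh 0 = 1] because [2 / 0 = 0]. *)
Definition hh n (u : 'cV[R]_n) : 'M[R]_n :=
  1%:M - (2 / dotv u u) *: (u *m u^T).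

Lemma hh_sym n (u : 'cV[R]_n) : (hh u)^T = hh u.
Proof. by rewrite /hh linearB /= trmx1 linearZ /= trmx_mul trmxK. Qed.

Lemma hh_apply n (u x : 'cV[R]_n) :
  hh u *m x = x - (2 / dotv u u * dotv u x) *: u.
Proof.
by rewrite /hh mulmxBl mul1mx -scalemxAl -mulmxA trmx_mul_dotv mul_mx_scalar scalerA.
Qed.

Lemma hh_sq n (u : 'cV[R]_n) : hh u *m hh u = 1%:M.
Proof.
have [u0|un0] := eqVneq (dotv u u) 0.
  by rewrite /hh u0 invr0 mulr0 scale0r subr0 mulmx1.
have hu : hh u *m u = - u.
  by rewrite hh_apply divfK // scaler_nat mulr2n opprD addrA subrr add0r.
by rewrite {2}/hh mulmxBr mulmx1 -scalemxAr mulmxA hu mulNmx scalerN opprK /hh subrK.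
Qed.

Lemma hh_orthogonal n (u : 'cV[R]_n) : (hh u)^T *m hh u = 1%:M.
Proof. by rewrite hh_sym hh_sq. Qed.

Lemma mxtrace_hh_mul n (u : 'cV[R]_n) (C : 'M[R]_n) :
  \tr (hh u *m C) = \tr C - 2 / dotv u u * dotv u (C *m u).
Proof.
rewrite /hh mulmxBl mul1mx -scalemxAl linearB /= mxtraceZ -mulmxA mxtrace_mulC.
by rewrite trace_mx11 /dotv mulmxA.
Qed.

Lemma hh_delta n (u : 'cV[R]_n.+1) : dotv u u = 1 ->
  hh (u - delta_mx 0 0) *m delta_mx 0 0 = u.
Proof.
move=> u1; set e := delta_mx 0 0 : 'cV[R]_n.+1; set w := u - e.
have ee : dotv e e = 1 by rewrite dotv_delta mxE !eqxx.
have ue : dotv e u = u 0 0 by rewrite dotv_delta.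
have ww : dotv w w = 2 - 2 * u 0 0.
  by rewrite /w !dotvBl !dotvBr u1 ee (dotvC u e) ue; ring.
have we : dotv w e = u 0 0 - 1 by rewrite /w dotvBl (dotvC u e) ue ee.
rewrite hh_apply.
have [w0|w0] := eqVneq (dotv w w) 0.
  have /eqP := dotvv_eq0 w0; rewrite /w subr_eq0 => /eqP <-.
  by rewrite subrr scaler0 subr0.
rewrite ww we.
have -> : 2 / (2 - 2 * u 0 0) * (u 0 0 - 1) = -1.
  by field; apply: contraNneq w0 => h; rewrite ww h.
by rewrite scaleN1r opprK /w addrC subrK.
Qed.

End Householder.

Lemma real_eigenvalue_realsym (C : numClosedFieldType) n (A : 'M[C]_n) (z : C)
    (w : 'rV[C]_n) :
  A^T = A -> map_mx Num.conj_op A = A -> w *m A = z *: w -> w != 0 ->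
  z \is Num.real.
Proof.
(* [z = (w A w^* ) / (w w^* )], a quotient of two self-conjugate numbers. *)
move=> AT Ac wA w0.
have Aji i j : A j i = A i j by rewrite -{1}AT mxE.
have Aconj i j : (A i j)^* = A i j by rewrite -{2}Ac mxE.
pose wc := map_mx Num.conj_op w.
pose s := (w *m A *m wc^T) 0 0; pose m := (w *m wc^T) 0 0.
have sE : s = z * m by rewrite /s /m wA -scalemxAl mxE.
have mE : m = \sum_i w 0 i * (w 0 i)^*.
  by rewrite /m mxE; apply: eq_bigr => i _; rewrite !mxE.
have m0 : m != 0.
  rewrite mE psumr_eq0 => [|i _]; last by rewrite mul_conjC_ge0.
  apply: contra w0 => /allP w_eq0; apply/eqP/matrixP => i j.
  by rewrite ord1 mxE; have := w_eq0 j (mem_index_enum _); rewrite mul_conjC_eq0 => /eqP.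
have m_real : m^* = m.
  by rewrite mE rmorph_sum; apply: eq_bigr => i _; rewrite rmorphM /= conjCK mulrC.
have s_real : s^* = s.
  have -> : s = \sum_i \sum_j w 0 i * A i j * (w 0 j)^*.
    rewrite /s -mulmxA mxE; apply: eq_bigr => i _; rewrite !mxE mulr_sumr.
    by apply: eq_bigr => j _; rewrite !mxE mulrA.
  rewrite rmorph_sum exchange_big /=; apply: eq_bigr => i _.
  rewrite rmorph_sum; apply: eq_bigr => j _ /=.
  by rewrite !rmorphM /= conjCK Aconj Aji mulrC [(w 0 i)^* * _]mulrC mulrA.
by rewrite CrealE -(mulfK m0 z) -sE fmorph_div /= s_real m_real.
Qed.

Section RealSpectral.
Variable R : rcfType.

Lemma symmetric_unit_eigenvector n (B : 'M[R]_n.+1) : B^T = B ->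
  exists k (u : 'cV[R]_n.+1), dotv u u = 1 /\ B *m u = k *: u.
Proof.
move=> BT; pose Bc := map_mx (real_complex R) B.
have [z Bz] := @eigenvalue_closed _ _ Bc (ltn0Sn n).
have z_real : z \is Num.real.
  move/eigenvalueP: Bz => [w wB w0]; apply: (real_eigenvalue_realsym _ _ wB w0).
    by rewrite /Bc map_trmx BT.
  rewrite /Bc -map_mx_comp; apply/matrixP => i j; rewrite !mxE /=.
  by apply: conj_Creal; rewrite complex_real.
move: Bz; rewrite -(RRe_real z_real) eigenvalue_map => /eigenvalueP [v vB v0].
have vv : 0 < dotv v^T v^T.
  rewrite lt_def dotvv_ge0 andbT; apply: contraNneq v0 => /dotvv_eq0.
  by move/(congr1 trmx); rewrite trmxK trmx0 => ->.
exists (complex.Re z), ((Num.sqrt (dotv v^T v^T))^-1 *: v^T); split.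
  rewrite dotvZl dotvZr mulrA -expr2 exprVn sqr_sqrtr ?mulVf ?gt_eqF //.
  exact: ltW.
by rewrite -scalemxAr -[B]BT -trmx_mul vB linearZ /= scalerA mulrC -scalerA.
Qed.

Lemma hh_deflate n (B : 'M[R]_(1 + n)) (u : 'cV[R]_(1 + n)) k :
  B^T = B -> dotv u u = 1 -> B *m u = k *: u ->
  let H := hh (u - delta_mx 0 0) in
  exists2 B2 : 'M[R]_n, B2^T = B2 & H *m B *m H = block_mx k%:M 0 0 B2.
Proof.
move=> BT u1 Bu H; set e := delta_mx 0 0 : 'cV[R]_(1 + n).
have He : H *m e = u := hh_delta u1.
have Hu : H *m u = e by rewrite -He mulmxA hh_sq mul1mx.
set A := H *m B *m H.
have AT : A^T = A by rewrite !trmx_mul hh_sym BT mulmxA.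
have Ae : A *m e = k *: e by rewrite -mulmxA He -mulmxA Bu -scalemxAr Hu.
have Acol i : A i 0 = k * e i 0.
  by have := congr1 (fun v : 'cV[R]_(1 + n) => v i 0) Ae; rewrite -colE !mxE.
clearbody A.
have Adl : dlsubmx A = 0.
  by apply/matrixP => i j; rewrite !mxE [j]ord1 lshift0 Acol !mxE /= mulr0.
have Aur : ursubmx A = 0 by rewrite -AT -trmx_dlsub Adl trmx0.
exists (drsubmx A); first by rewrite trmx_drsub AT.
rewrite -[LHS](submxK A) Adl Aur.
congr block_mx; apply/matrixP => i j.
by rewrite !ord1 !mxE lshift0 Acol !mxE /= mulr1.
Qed.

Theorem symmetric_orthodiag n (B : 'M[R]_n) : B^T = B ->
  exists (V : 'M[R]_n) (s : 'rV[R]_n), V^T *m V = 1%:M /\ B = V *m diag_mx s *m V^T.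
Proof.
elim: n B => [|n IH] B BT.
  exists 1%:M, 0; split; first by rewrite trmx1 mulmx1.
  by apply/matrixP => [[]].
have [k [u [u1 Bu]]] := symmetric_unit_eigenvector BT.
have [B2 B2T HBH] := @hh_deflate n B u k BT u1 Bu.
set H := hh _ in HBH.
have [V2 [s2 [V2o B2E]]] := IH B2 B2T.
pose W : 'M[R]_(1 + n) := block_mx 1%:M 0 0 V2.
have Wo : W^T *m W = 1%:M.
  rewrite tr_block_mx !trmx0 trmx1 mulmx_block.
  by rewrite !(mul0mx, mulmx0, mul1mx, mulmx1, addr0, add0r) V2o -scalar_mx_block.
have WDW : W *m diag_mx (row_mx k%:M s2) *m W^T = H *m B *m H.
  rewrite HBH tr_block_mx !trmx0 trmx1 diag_mx_row.
  have -> : diag_mx (k%:M : 'rV[R]_1) = k%:M by apply/matrixP => i j; rewrite !ord1 !mxE.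
  by rewrite !mulmx_block !(mul0mx, mulmx0, mul1mx, mulmx1, addr0, add0r) -B2E.
exists (H *m W), (row_mx k%:M s2); split.
  by rewrite trmx_mul mulmxA -(mulmxA _ H^T) hh_sym hh_sq mulmx1 Wo.
rewrite trmx_mul hh_sym !mulmxA -(mulmxA H) -(mulmxA H) WDW.
by rewrite !mulmxA hh_sq mul1mx -mulmxA hh_sq mulmx1.
Qed.

End RealSpectral.

Section OrthogonalOrbit.
Variable R : realType.
Implicit Types n : nat.

Lemma mxtrace_hh2_delta n (i j : 'I_n) (t : R) (N : 'M[R]_n) : i != j ->
  let u := delta_mx i 0 : 'cV[R]_n in
  \tr (hh u *m hh (u + t *: delta_mx j 0) *m N) =
  \tr N - 2 / (1 + t ^+ 2) * (t * (N i j - N j i) + t ^+ 2 * (N i i + N j j)).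
Proof.
move=> ij u; set e := delta_mx j 0 : 'cV[R]_n; set v := u + t *: e.
have dotv_deltaE k l : dotv (delta_mx k 0) (N *m delta_mx l 0) = N k l.
  by rewrite dotv_delta -colE mxE.
have uu : dotv u u = 1 by rewrite dotv_delta mxE !eqxx.
have ue : dotv u e = 0 by rewrite dotv_delta mxE (negPf ij).
have ee : dotv e e = 1 by rewrite dotv_delta mxE !eqxx.
have uv : dotv u v = 1 by rewrite dotvDr dotvZr uu ue mulr0 addr0.
have vv : dotv v v = 1 + t ^+ 2.
  by rewrite !dotvDl !dotvDr !dotvZl !dotvZr uu ue ee (dotvC e u) ue; ring.
have Nvu : dotv v (N *m u) = N i i + t * N j i.
  by rewrite dotvDl dotvZl !dotv_deltaE.
have Nvv : dotv v (N *m v) = N i i + t * N i j + t * (N j i + t * N j j).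
  by rewrite mulmxDr -scalemxAr !dotvDl !dotvDr !dotvZl !dotvZr !dotv_deltaE; ring.
rewrite -mulmxA !mxtrace_hh_mul -mulmxA hh_apply dotvBr dotvZr uv vv uu Nvu Nvv.
rewrite dotv_deltaE.
have t0 : 1 + t ^+ 2 != 0 by rewrite gt_eqF // ltr_pwDl ?sqr_ge0.
by field.
Qed.

(* Reflections [hh u] force the quadratic form of [N] to be nonnegative, and
   rotations [hh u *m hh v] in a coordinate plane force [N] to be symmetric. *)
Lemma psd_of_mxtrace_orbit_max n (N : 'M[R]_n) :
  (forall O : 'M[R]_n, O^T *m O = 1%:M -> \tr (O *m N) <= \tr N) -> psd N.
Proof.
move=> Nmax.
have qf_ge0 (u : 'cV[R]_n) : 0 <= dotv u (N *m u).
  have := Nmax _ (hh_orthogonal u); rewrite mxtrace_hh_mul.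
  have [u0|un0] := eqVneq (dotv u u) 0.
    by rewrite (dotvv_eq0 u0) mulmx0 dotvE big1 // => i _; rewrite mxE mul0r.
  have c0 : 0 < 2 / dotv u u by rewrite divr_gt0 // lt_def un0 dotvv_ge0.
  by rewrite lerBlDr lerDl pmulr_rge0.
split; last by move=> v; rewrite -mulmxA; exact: qf_ge0.
apply/matrixP => i j; rewrite mxE.
have [-> //|ij] := eqVneq i j.
apply/eqP; rewrite eq_sym -subr_eq0; apply/eqP.
apply: (@lin_coef_eq0 _ (N i i + N j j)) => t.
set u := delta_mx i 0 : 'cV[R]_n; set O := hh u *m hh (u + t *: delta_mx j 0).
have O1 : O^T *m O = 1%:M.
  by rewrite trmx_mul !hh_sym -mulmxA (mulmxA (hh u)) hh_sq mul1mx hh_sq.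
have := Nmax _ O1; rewrite mxtrace_hh2_delta // lerBlDr lerDl.
have k0 : 0 < 2 / (1 + t ^+ 2) by rewrite divr_gt0 // ltr_pwDl ?sqr_ge0.
by rewrite pmulr_rge0.
Qed.

End OrthogonalOrbit.

Section PSD.
Variable R : realType.
Implicit Types m n : nat.

Lemma psd_qf_ge0 n (S : 'M[R]_n) x : psd S -> 0 <= dotv x (S *m x).
Proof. by case=> _ S_ge0; rewrite /dotv mulmxA. Qed.

Lemma psd_qf_eq0 n (S : 'M[R]_n) x : psd S -> dotv x (S *m x) = 0 -> S *m x = 0.
Proof.
move=> Spsd x0; have [ST _] := Spsd.
suff Sx_orth y : dotv y (S *m x) = 0 by exact/dotvv_eq0/Sx_orth.
have : 2 * dotv y (S *m x) = 0.
  apply: (@lin_coef_eq0 _ (dotv y (S *m y))) => t.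
  have := psd_qf_ge0 (x + t *: y) Spsd.
  rewrite mulmxDr -scalemxAr !dotvDl !dotvDr !dotvZl !dotvZr x0.
  rewrite (dotv_mulmx S x y) ST (dotvC (S *m x) y); lra.
by move/eqP; rewrite mulf_eq0 pnatr_eq0 => /eqP.
Qed.

Lemma mxtrace_congr_psd_ge0 m n (S : 'M[R]_m) (D : 'M[R]_(m, n)) :
  psd S -> 0 <= \tr (D^T *m S *m D).
Proof.
move=> Spsd; apply: sumr_ge0 => i _.
by rewrite -mulmxA trmx_mulE col_mulmx psd_qf_ge0.
Qed.

Lemma psd_congr_mx_eq0 m n (S : 'M[R]_m) (D : 'M[R]_(m, n)) :
  psd S -> \tr (D^T *m S *m D) = 0 -> S *m D = 0.
Proof.
move=> Spsd /eqP; rewrite psumr_eq0 => [/allP D0|i _]; last first.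
  by rewrite -mulmxA trmx_mulE col_mulmx psd_qf_ge0.
apply/matrixP => i j; have /eqP := D0 j (mem_index_enum _).
rewrite -mulmxA trmx_mulE col_mulmx => /(psd_qf_eq0 Spsd).
by move/(congr1 (fun v : 'cV[R]_m => v i 0)); rewrite -col_mulmx !mxE.
Qed.

Lemma psd_congr m n (S : 'M[R]_m) (B : 'M[R]_(m, n)) : psd S -> psd (B^T *m S *m B).
Proof.
case=> ST S_ge0; split; first by rewrite !trmx_mul trmxK ST mulmxA.
by move=> v; have := S_ge0 (B *m v); rewrite trmx_mul !mulmxA.
Qed.

Lemma psd_sqrt_uniq n (S C : 'M[R]_n) : psd S -> psd C -> S *m S = C *m C -> S = C.
Proof.
move=> Spsd Cpsd SC; have [ST _] := Spsd; have [CT _] := Cpsd.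
pose D := S - C.
have DT : D^T = D by rewrite /D linearB /= ST CT.
have SDDC : S *m D + D *m C = 0.
  by rewrite /D mulmxBr mulmxBl SC addrA subrK subrr.
have trD : \tr (D^T *m S *m D) + \tr (D^T *m C *m D) = 0.
  rewrite DT -!mulmxA (mulmxA D C D) (mxtrace_mulC (D *m C) D) -mxtraceD -mulmxDr.
  by rewrite SDDC mulmx0 mxtrace0.
have t1 := mxtrace_congr_psd_ge0 D Spsd; have t2 := mxtrace_congr_psd_ge0 D Cpsd.
have SD : S *m D = 0 by apply: (psd_congr_mx_eq0 Spsd); lra.
have CD : C *m D = 0 by apply: (psd_congr_mx_eq0 Cpsd); lra.
have DD : D^T *m D = 0 by rewrite DT {1}/D mulmxBl SD CD subrr.
apply/eqP; rewrite -subr_eq0 -/D; apply/eqP/matrixP => i j.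
have := congr1 (fun A : 'M[R]_n => A j j) DD; rewrite trmx_mulE mxE => /dotvv_eq0.
by move/(congr1 (fun v : 'cV[R]_n => v i 0)); rewrite !mxE.
Qed.

Lemma nucnormE m n (Y : 'M[R]_(m, n)) (S : 'M[R]_n) :
  psd S -> S *m S = Y^T *m Y -> nucnorm Y = \tr S.
Proof.
move=> Spsd SY; rewrite /nucnorm; congr mxtrace.
have [S'psd S'Y] := @getPex _ [set S : 'M[R]_n | psd S /\ S *m S = Y^T *m Y]
  (ex_intro _ S (conj Spsd SY)).
by apply: psd_sqrt_uniq => //; rewrite S'Y.
Qed.

End PSD.

Section StiefelMax.
Variable R : realType.
Variables d K : nat.
Implicit Types X Y Z : 'M[R]_(d, K).

Lemma mxtrace_dist_stiefel Z Y : Stiefel Z ->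
  \tr ((Z - Y)^T *m (Z - Y)) = K%:R - 2 * \tr (Z^T *m Y) + \tr (Y^T *m Y).
Proof.
rewrite /Stiefel => hZ.
rewrite [(Z - Y)^T]linearB /= !mulmxBl !mulmxBr hZ !linearB /= mxtrace1.
rewrite -[\tr (Y^T *m Z)]mxtrace_tr trmx_mul trmxK; ring.
Qed.

Lemma P_StE X Y : Stiefel X ->
  P_St Y X <-> forall Z, Stiefel Z -> \tr (Z^T *m Y) <= \tr (X^T *m Y).
Proof.
move=> hX.
have frob_le Z : Stiefel Z ->
    (frob (X - Y) <= frob (Z - Y)) = (\tr (Z^T *m Y) <= \tr (X^T *m Y)).
  move=> hZ; rewrite /frob ler_sqrt ?mxtrace_gram_ge0 // !mxtrace_dist_stiefel //.
  by apply/idP/idP => h; lra.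
split=> [[_ Xmin] Z hZ | Xmax]; first by rewrite -frob_le //; exact: Xmin.
by split=> // Z hZ; rewrite frob_le //; exact: Xmax.
Qed.

Lemma stiefel_max_polar X Y : Stiefel X ->
  (forall Z, Stiefel Z -> \tr (Z^T *m Y) <= \tr (X^T *m Y)) ->
  Y = X *m (X^T *m Y) /\ psd (X^T *m Y).
Proof.
move=> hX Xmax.
have Npsd : psd (Y *m X^T).
  apply: psd_of_mxtrace_orbit_max => O hO.
  have hZ : Stiefel (O^T *m X).
    by rewrite /Stiefel trmx_mul trmxK mulmxA -(mulmxA X^T) (mulmx1C hO) mulmx1.
  have := Xmax _ hZ.
  by rewrite trmx_mul trmxK -mulmxA !(mxtrace_mulC X^T) mulmxA.
have [NT _] := Npsd.
have XYT : X *m Y^T = Y *m X^T by rewrite -NT trmx_mul trmxK.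
have YE : Y = X *m (Y^T *m X) by rewrite mulmxA XYT -mulmxA hX mulmx1.
have CT : Y^T *m X = X^T *m Y by rewrite {2}YE mulmxA hX mul1mx.
split; first by rewrite -CT.
have -> : X^T *m Y = X^T *m (Y *m X^T) *m X by rewrite !mulmxA -(mulmxA _ X^T) hX mulmx1.
exact: psd_congr.
Qed.

Lemma nucnorm_polar X (C : 'M[R]_K) : Stiefel X -> psd C -> nucnorm (X *m C) = \tr C.
Proof.
move=> hX Cpsd; have [CT _] := Cpsd.
by apply: nucnormE => //; rewrite trmx_mul CT -mulmxA (mulmxA X^T) hX mul1mx.
Qed.

End StiefelMax.

Section NuclearNorm.
Variable R : realType.

Lemma dotv_le_sqrt n (z y : 'cV[R]_n) : dotv z z = 1 -> dotv z y <= Num.sqrt (dotv y y).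
Proof.
move=> zz; set r := Num.sqrt (dotv y y).
have r_ge0 : 0 <= r := sqrtr_ge0 _.
have rr : r ^+ 2 = dotv y y by rewrite sqr_sqrtr // dotvv_ge0.
have [r0|rn0] := eqVneq r 0.
  move: rr; rewrite r0 expr0n /= => /esym/dotvv_eq0 ->.
  by rewrite dotvE big1 // => i _; rewrite mxE mulr0.
have := dotvv_ge0 (r *: z - y).
rewrite !dotvBl !dotvBr !dotvZl !dotvZr zz -rr (dotvC y z).
have : 0 < r by rewrite lt_def rn0.
nra.
Qed.

Lemma psd_sqrt_orthodiag n (V : 'M[R]_n) (s : 'rV[R]_n) :
  V^T *m V = 1%:M -> (forall i, 0 <= s 0 i) ->
  let S := V *m diag_mx (\row_i Num.sqrt (s 0 i)) *m V^T in
  psd S /\ S *m S = V *m diag_mx s *m V^T.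
Proof.
move=> Vo s_ge0 S; split; [split|].
- by rewrite !trmx_mul trmxK tr_diag_mx mulmxA.
- move=> v; set w := V^T *m v.
  have -> : v^T *m S *m v = w^T *m diag_mx (\row_i Num.sqrt (s 0 i)) *m w.
    by rewrite /S /w trmx_mul trmxK !mulmxA.
  rewrite mxE; apply: sumr_ge0 => i _; rewrite mul_mx_diag !mxE.
  by rewrite mulrAC -expr2 mulr_ge0 ?sqr_ge0 ?sqrtr_ge0.
- rewrite /S -!mulmxA; congr (_ *m _); rewrite !mulmxA -(mulmxA _ V^T) Vo mulmx1.
  congr (_ *m _); rewrite mulmx_diag; congr diag_mx; apply/rowP => i; rewrite !mxE.
  by rewrite -expr2 sqr_sqrtr.
Qed.

Lemma mxtrace_le_nucnorm d K (Y Z : 'M[R]_(d, K)) :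
  Stiefel Z -> \tr (Z^T *m Y) <= nucnorm Y.
Proof.
move=> hZ.
have YYT : (Y^T *m Y)^T = Y^T *m Y by rewrite trmx_mul trmxK.
have [V [s [Vo YYE]]] := symmetric_orthodiag YYT.
have VVT : V *m V^T = 1%:M := mulmx1C Vo.
have WW : (Y *m V)^T *m (Y *m V) = diag_mx s.
  by rewrite trmx_mul -mulmxA (mulmxA Y^T) YYE !mulmxA Vo mul1mx -mulmxA Vo mulmx1.
have ZV : (Z *m V)^T *m (Z *m V) = 1%:M.
  by rewrite trmx_mul -mulmxA (mulmxA Z^T) hZ mul1mx Vo.
have s_ge0 i : 0 <= s 0 i.
  have := congr1 (fun A : 'M[R]_K => A i i) WW.
  by rewrite trmx_mulE mxE eqxx mulr1n => <-; exact: dotvv_ge0.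
have [Spsd SS] := psd_sqrt_orthodiag Vo s_ge0.
rewrite (nucnormE Spsd (etrans SS (esym YYE))) [X in _ <= X]mxtrace_mulC mulmxA Vo.
rewrite mul1mx mxtrace_diag.
have -> : \tr (Z^T *m Y) = \tr ((Z *m V)^T *m (Y *m V)).
  by rewrite trmx_mul [RHS]mxtrace_mulC mulmxA -(mulmxA Y) VVT mulmx1 mxtrace_mulC.
apply: ler_sum => i _; rewrite trmx_mulE mxE.
have := congr1 (fun A : 'M[R]_K => A i i) WW; rewrite trmx_mulE mxE eqxx mulr1n => <-.
apply: dotv_le_sqrt.
by have := congr1 (fun A : 'M[R]_K => A i i) ZV; rewrite trmx_mulE mxE eqxx mulr1n.
Qed.

End NuclearNorm.

Section Criticality.
Variable R : realType.

Lemma is_derive_quad (a b c : R) :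
  is_derive (0 : R) (1 : R) (fun t : R => a + t * b + t ^+ 2 * c) b.
Proof.
have -> : (fun t : R => a + t * b + t ^+ 2 * c) = horner (a%:P + b *: 'X + c *: 'X^2).
  by apply: funext => t; rewrite !hornerE /=; ring.
apply: is_derive_eq (is_derive_poly _ _) _.
by rewrite !derivD derivC !derivZ derivX derivXn !hornerE.
Qed.

Lemma mxtrace_skew_sym n (S T : 'M[R]_n) : S^T = - S -> T^T = T -> \tr (S *m T) = 0.
Proof.
move=> ST TT; have : \tr (S *m T) = - \tr (S *m T).
  by rewrite -[LHS]mxtrace_tr trmx_mul ST TT mulmxN linearN /= mxtrace_mulC.
lra.
Qed.

Lemma mxtrace_quad_expand d K (M : 'M[R]_d) (D : 'M[R]_K) (X V : 'M[R]_(d, K)) t :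
  \tr ((X + t *: V)^T *m M *m (X + t *: V) *m D) =
  \tr (X^T *m M *m X *m D)
  + t * (\tr (X^T *m M *m V *m D) + \tr (V^T *m M *m X *m D))
  + t ^+ 2 * \tr (V^T *m M *m V *m D).
Proof.
rewrite [(X + t *: V)^T]linearD /= [(t *: V)^T]linearZ /=.
rewrite !mulmxDl !mulmxDr !mulmxDl -!scalemxAl -!scalemxAr -!scalemxAl.
by rewrite !mxtraceD !mxtraceZ; ring.
Qed.

Lemma critical_St_mxtrace_quad d K (M : 'M[R]_d) (D S : 'M[R]_K) (X : 'M[R]_(d, K)) :
  M^T = M -> D^T = D -> S^T = S -> Stiefel X -> M *m X *m D = X *m S ->
  critical_St (fun X => \tr (X^T *m M *m X *m D)) X.
Proof.
move=> MT DT ST hX MXD; split=> //; split=> [|V hV].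
  by rewrite /tangent trmx0 mulmx0 mul0mx addr0.
have VX_skew : (V^T *m X)^T = - (V^T *m X).
  by rewrite trmx_mul trmxK; apply/eqP; rewrite -addr_eq0 hV.
have lin0 : \tr (X^T *m M *m V *m D) + \tr (V^T *m M *m X *m D) = 0.
  rewrite -[\tr (X^T *m _ *m _ *m _)]mxtrace_tr !trmx_mul trmxK MT DT mxtrace_mulC.
  by rewrite -!mulmxA (mulmxA M) MXD mulmxA mxtrace_skew_sym // addr0.
rewrite trmx0 mul0mx mxtrace0.
under eq_fun do rewrite mxtrace_quad_expand.
by apply: is_derive_eq (is_derive_quad _ _ _) _.
Qed.

End Criticality.

Theorem lemma7 (R : realType) (d K : nat) (hK : (1 <= K)%N) (hdK : (K < d)%N)
  (Q : 'M[R]_(d, K)) (hQ : Stiefel Q)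
  (lam a : 'rV[R]_K)
  (hlam_dec : forall i j : 'I_K, (i < j)%N -> lam 0 j < lam 0 i)
  (hlam_pos : forall i : 'I_K, 0 < lam 0 i)
  (ha_dec : forall i j : 'I_K, (i < j)%N -> a 0 j < a 0 i)
  (ha_pos : forall i : 'I_K, 0 < a 0 i)
  (alpha : R) (halpha : 0 < alpha) :
  let Theta := diag_mx (\row_i Num.sqrt (lam 0 i)) in
  let M := Q *m (Theta *m Theta) *m Q^T in
  let A := fun X : 'M[R]_(d, K) => alpha *: X + M *m X *m diag_mx a in
  let f := fun X : 'M[R]_(d, K) => \tr (X^T *m M *m X *m diag_mx a) in
  forall X : 'M[R]_(d, K), Stiefel X ->
    (P_St (A X) X <-> \tr (X^T *m A X) = nucnorm (A X)) /\
    (P_St (A X) X -> critical_St f X).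
Proof.
move=> Theta M A f X hX.
have MT : M^T = M by rewrite /M !trmx_mul trmxK tr_diag_mx mulmxA.
have DT : (diag_mx a)^T = diag_mx a by rewrite tr_diag_mx.
split; [split|].
- move/(P_StE _ hX)/(stiefel_max_polar hX) => [AXE Cpsd].
  by rewrite {2}AXE nucnorm_polar.
- by move=> trE; apply/(P_StE _ hX) => Z hZ; rewrite trE mxtrace_le_nucnorm.
- move/(P_StE _ hX)/(stiefel_max_polar hX) => [AXE [CT _]].
  apply: (critical_St_mxtrace_quad MT DT _ hX (S := X^T *m A X - alpha%:M)).
    by rewrite linearB /= CT tr_scalar_mx.
  by rewrite mulmxBr mul_mx_scalar -AXE /A addrC addKr.
Qed.
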